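(* Let $(G,\cdot,N,\star,\odot)$ be a left skew bracoid and $(H,\circ)$ a group. Assume $\boxdot$ is a transitive right action of $(H,\circ)$ on $N$ such that $g\odot(\eta\boxdot h)=(g\odot\eta)\boxdot h$ for all $g\in G$, $h\in H$, $\eta\in N$. Then for all $g\in G$, $\eta\in N$, $h\in H$, $$(g\odot\eta)^{\beta(h)}=({}^{\alpha(g)}(\eta^{\beta(h)}))\star(\eta^{\beta(h)})\star({}^{\alpha(g)}(e_N\boxdot h)).$$
   Context: For a group $(N,\star)$, $e_N$ denotes its identity and $\overline{\eta}$ the inverse of $\eta$. A left skew bracoid is $(G,\cdot,N,\star,\odot)$ with $(G,\cdot),(N,\star)$ groups and $\odot$ a transitive left action of $G$ on $N$ with $g\odot(\mu\star\eta)=(g\odot\mu)\star\overline{(g\odot e_N)}\star(g\odot\eta)$ for all $g\in G$, $\mu,\eta\in N$. For $g\in G$, ${}^{\alpha(g)}\eta=\overline{(g\odot e_N)}\star(g\odot\eta)\star\overline{\eta}$. For $h\in H$, $\eta^{\beta(h)}=\overline{\eta}\star(\eta\boxdot h)\star\overline{(e_N\boxdot h)}$. *)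

Set Implicit Arguments.

Record is_group (T : Type) (op : T -> T -> T) (e : T) (inv : T -> T) : Prop := {
  grp_assoc : forall x y z, op x (op y z) = op (op x y) z;
  grp_idl   : forall x, op e x = x;
  grp_idr   : forall x, op x e = x;
  grp_invl  : forall x, op (inv x) x = e;
  grp_invr  : forall x, op x (inv x) = e
}.

Definition is_left_action (G N : Type) (mulG : G -> G -> G) (eG : G)
  (act : G -> N -> N) : Prop :=
  (forall x, act eG x = x) /\
  (forall g g' x, act (mulG g g') x = act g (act g' x)).

Definition left_transitive (G N : Type) (act : G -> N -> N) : Prop :=
  forall x y : N, exists g : G, act g x = y.

Definition is_right_action (H N : Type) (mulH : H -> H -> H) (eH : H)
  (ract : N -> H -> N) : Prop :=
  (forall x, ract x eH = x) /\
  (forall h h' x, ract x (mulH h h') = ract (ract x h) h').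

Definition right_transitive (H N : Type) (ract : N -> H -> N) : Prop :=
  forall x y : N, exists h : H, ract x h = y.

Definition is_left_skew_bracoid (G N : Type)
  (mulG : G -> G -> G) (eG : G) (invG : G -> G)
  (star : N -> N -> N) (eN : N) (invN : N -> N)
  (act : G -> N -> N) : Prop :=
  is_group mulG eG invG /\ is_group star eN invN /\
  is_left_action mulG eG act /\ left_transitive act /\
  (forall g mu eta,
     act g (star mu eta) = star (star (act g mu) (invN (act g eN))) (act g eta)).

Definition alpha (G N : Type) (star : N -> N -> N) (eN : N) (invN : N -> N)
  (act : G -> N -> N) (g : G) (eta : N) : N :=
  star (star (invN (act g eN)) (act g eta)) (invN eta).

Definition beta (H N : Type) (star : N -> N -> N) (eN : N) (invN : N -> N)
  (ract : N -> H -> N) (h : H) (eta : N) : N :=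
  star (star (invN eta) (ract eta h)) (invN (ract eN h)).


(* Put gamma_g(eta) := (g . e_N)^-1 * (g . eta).  The bracoid law says precisely that
   gamma_g is an endomorphism of the group N, and alpha(g) eta = gamma_g(eta) * eta^-1.
   With b := eta^beta(h) and E := e_N . h the right-hand side telescopes to
   gamma_g(b) * gamma_g(E) * E^-1 = gamma_g(eta^-1 * (eta . h)) * E^-1, which equals
   (g . eta)^-1 * (g . (eta . h)) * E^-1; commuting the actions gives the left-hand side. *)

Section GroupFacts.

Variables (T : Type) (op : T -> T -> T) (e : T) (inv : T -> T).
Hypothesis HT : is_group op e inv.

Local Notation "x * y" := (op x y).

Lemma mulKg (x y : T) : inv x * (x * y) = y.
Proof. now rewrite (grp_assoc HT), (grp_invl HT), (grp_idl HT). Qed.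

Lemma mulVKg (x y : T) : x * (inv x * y) = y.
Proof. now rewrite (grp_assoc HT), (grp_invr HT), (grp_idl HT). Qed.

Lemma mulgK (x y : T) : x * inv y * y = x.
Proof. now rewrite <- (grp_assoc HT), (grp_invl HT), (grp_idr HT). Qed.

Lemma mulg_eq_l (x y z : T) : x * y = z -> inv x * z = y.
Proof. intros <-. apply mulKg. Qed.

End GroupFacts.

Arguments mulKg {T op e inv}.
Arguments mulVKg {T op e inv}.
Arguments mulgK {T op e inv}.
Arguments mulg_eq_l {T op e inv}.

Section Bracoid.

Variables (G N H : Type) (star : N -> N -> N) (eN : N) (invN : N -> N).
Variables (act : G -> N -> N) (ract : N -> H -> N).
Hypothesis HN : is_group star eN invN.
Hypothesis bracoid_law : forall g mu eta,
  act g (star mu eta) = star (star (act g mu) (invN (act g eN))) (act g eta).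

Local Notation "x * y" := (star x y).
Local Notation "x ^-1" := (invN x) (at level 3, format "x ^-1").

Definition gamma (g : G) (eta : N) : N := (act g eN)^-1 * act g eta.

Lemma gammaM (g : G) (mu eta : N) : gamma g (mu * eta) = gamma g mu * gamma g eta.
Proof.
  unfold gamma.
  now rewrite bracoid_law, !(grp_assoc HN).
Qed.

Lemma gammaV (g : G) (eta : N) : gamma g eta^-1 = (act g eta)^-1 * act g eN.
Proof.
  unfold gamma. symmetry.
  apply (mulg_eq_l HN).
  now rewrite (grp_assoc HN), <- bracoid_law, (grp_invr HN).
Qed.

Lemma alphaE (g : G) (eta : N) : alpha star eN invN act g eta = gamma g eta * eta^-1.
Proof. reflexivity. Qed.

Lemma alpha_mulg (g : G) (eta : N) : alpha star eN invN act g eta * eta = gamma g eta.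
Proof. rewrite alphaE. apply (mulgK HN). Qed.

Lemma beta_mul_unit (h : H) (eta : N) :
  beta star eN invN ract h eta * ract eN h = eta^-1 * ract eta h.
Proof. apply (mulgK HN). Qed.

Lemma alpha_beta_telescope (g : G) (eta : N) (h : H) :
  alpha star eN invN act g (beta star eN invN ract h eta) * beta star eN invN ract h eta
    * alpha star eN invN act g (ract eN h)
  = (act g eta)^-1 * act g (ract eta h) * (ract eN h)^-1.
Proof.
  rewrite alpha_mulg, alphaE, (grp_assoc HN), <- gammaM, beta_mul_unit, gammaM, gammaV.
  unfold gamma. now rewrite <- ((grp_assoc HN) _ (act g eN)), (mulVKg HN).
Qed.

End Bracoid.

Arguments alpha_beta_telescope {G N H star eN invN act ract}.

Theorem proposition3p4
  (G N H : Type)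
  (mulG : G -> G -> G) (eG : G) (invG : G -> G)
  (star : N -> N -> N) (eN : N) (invN : N -> N)
  (act : G -> N -> N)
  (mulH : H -> H -> H) (eH : H) (invH : H -> H)
  (ract : N -> H -> N) :
  is_left_skew_bracoid mulG eG invG star eN invN act ->
  is_group mulH eH invH ->
  is_right_action mulH eH ract ->
  right_transitive ract ->
  (forall g h eta, act g (ract eta h) = ract (act g eta) h) ->
  forall (g : G) (eta : N) (h : H),
    beta star eN invN ract h (act g eta) =
    star (star (alpha star eN invN act g (beta star eN invN ract h eta))
               (beta star eN invN ract h eta))
         (alpha star eN invN act g (ract eN h)).
Proof.
  intros [_ [HN [_ [_ bracoid_law]]]] _ _ _ act_ract_comm g eta h.
  now rewrite (alpha_beta_telescope HN bracoid_law), act_ract_comm.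
Qed.
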